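(* Let $m\ge 2$ and $n\ge2$ be integers with $n\geq \lfloor m/2\rfloor+1$. Then $\gamma_{oir2}(P_m\Box K_n)=m(n-1)=\alpha(P_m)\beta(K_n)+\beta(P_m)|V(K_n)|-\min\{\beta(P_m),\beta(K_n)\}$.
   Context: $P_m$ is the path on $m$ vertices and $K_n$ the complete graph on $n$ vertices. $\alpha(F)$ is the independence number and $\beta(F)$ the vertex cover number of a graph $F$. For a graph $G$, a function $f:V(G)\to\mathcal{P}(\{1,2\})$ is an outer-independent 2-rainbow dominating function (OI2RD function) if every vertex $v$ with $f(v)=\emptyset$ satisfies $\bigcup_{u\in N(v)}f(u)=\{1,2\}$ and the set $\{v: f(v)=\emptyset\}$ is independent. The weight of $f$ is $\sum_{v}|f(v)|$ and $\gamma_{oir2}(G)$ is the minimum weight of an OI2RD function of $G$. The Cartesian product $G\Box H$ has vertex set $V(G)\times V(H)$, with $(x,y)(x',y')$ an edge iff either $x=x'$ and $yy'\in E(H)$, or $y=y'$ and $xx'\in E(G)$. *)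

(* A simple graph is a symmetric irreflexive e : rel T on a finType T. *)
From mathcomp Require Import all_boot all_order.
Set Implicit Arguments. Unset Strict Implicit. Unset Printing Implicit Defensive.

Section Graphs.
Variables (T : finType) (e : rel T).

Definition independent (S : {set T}) : bool :=
  [forall x in S, forall y in S, ~~ e x y].

Definition vertex_cover (S : {set T}) : bool :=
  [forall x, forall y, e x y ==> (x \in S) || (y \in S)].

Definition alpha : nat := \max_(S : {set T} | independent S) #|S|.

(* vertex cover number beta (setT is always a cover, so #|T| is a valid default) *)
Definition beta : nat := \big[minn/#|T|]_(S : {set T} | vertex_cover S) #|S|.

(* Outer-independent 2-rainbow dominating function; colours {1,2} are
   represented by 'I_2 = {0,1}. *)
Definition oi2rd (f : {ffun T -> {set 'I_2}}) : bool :=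
  [forall v, (f v == set0) ==> (\bigcup_(u | e v u) f u == [set: 'I_2])]
  && independent [set v | f v == set0].

Definition weight (f : {ffun T -> {set 'I_2}}) : nat := \sum_(v : T) #|f v|.

(* gamma_oir2: minimum weight of an OI2RD function; the default value
   2 * #|T| is the weight of the constant-{1,2} function, which is an OI2RD
   function, so it does not affect the minimum. *)
Definition gamma_oir2 : nat :=
  \big[minn/(2 * #|T|)]_(f : {ffun T -> {set 'I_2}} | oi2rd f) weight f.

End Graphs.

Definition path_rel (m : nat) : rel 'I_m :=
  fun i j => (i.+1 == j :> nat) || (j.+1 == i :> nat).

Definition complete_rel (n : nat) : rel 'I_n := fun i j => i != j.

Definition box_rel (T1 T2 : finType) (e1 : rel T1) (e2 : rel T2) : rel (T1 * T2) :=
  fun p q => ((p.1 == q.1) && e2 p.2 q.2) || ((p.2 == q.2) && e1 p.1 q.1).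
Arguments path_rel m : clear implicits.
Arguments complete_rel n : clear implicits.

From mathcomp Require Import all_boot all_order.
From mathcomp Require Import zify.
Set Implicit Arguments. Unset Strict Implicit. Unset Printing Implicit Defensive.
Import Order.TTheory.

(* Lower bound: in G [] K_n every copy {x} x K_n of the clique contains at most
   one vertex with empty label (the empty labels form an independent set), so
   each of the #|G| cliques has weight at least n - 1.
   Upper bound: if G is bipartite with colouring c and has no isolated vertex,
   label (x, c x) empty and every other (x, j) with {c x}.  An empty vertex
   (x, c x) sees colour c x inside its clique and the other colour at (y, c x)
   for any neighbour y of x, while two empty vertices are never adjacent.
   For G = P_m this gives m (n - 1); the second equation is arithmetic with
   alpha(P_m) = ceil(m/2), beta(P_m) = floor(m/2), beta(K_n) = n - 1, where
   n >= floor(m/2) + 1 makes the minimum equal to floor(m/2). *)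

Section Cardinality.
Variable T : finType.

Lemma inj_nat_leq_card k (S : {set T}) (g : nat -> T) :
  {in [pred i | i < k] &, injective g} -> (forall i, i < k -> g i \in S) ->
  k <= #|S|.
Proof.
move=> g_inj gS; rewrite cardE.
have -> : k = size (map g (iota 0 k)) by rewrite size_map size_iota.
apply: uniq_leq_size.
  rewrite map_inj_in_uniq ?iota_uniq // => a b; rewrite !mem_iota /= !add0n.
  exact: g_inj.
move=> y /mapP [i]; rewrite mem_iota add0n /= => ltik ->.
by rewrite mem_enum; apply: gS.
Qed.

Lemma inj_card_leq_nat k (S : {set T}) (g : T -> nat) :
  {in S &, injective g} -> (forall x, x \in S -> g x < k) -> #|S| <= k.
Proof.
move=> g_inj gS; rewrite cardE -(size_map g) -[X in _ <= X](size_iota 0 k).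
apply: uniq_leq_size.
  by rewrite map_inj_in_uniq ?enum_uniq // => a b; rewrite !mem_enum; apply: g_inj.
move=> y /mapP [x]; rewrite mem_enum => Sx ->.
by rewrite mem_iota add0n /= gS.
Qed.

End Cardinality.

Section GraphParameters.
Variables (T : finType) (e : rel T).

Lemma independentP (S : {set T}) :
  reflect {in S &, forall x y, ~~ e x y} (independent e S).
Proof.
apply: (iffP forallP) => [ind x y Sx Sy | ind x].
  by move/implyP/(_ Sx)/forallP/(_ y)/implyP/(_ Sy): (ind x).
by apply/implyP => Sx; apply/forallP => y; apply/implyP => Sy; apply: ind.
Qed.

Lemma vertex_coverP (S : {set T}) :
  reflect (forall x y, e x y -> (x \in S) || (y \in S)) (vertex_cover e S).
Proof.
apply: (iffP forallP) => [cov x y | cov x].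
  by move/forallP/(_ y)/implyP: (cov x).
by apply/forallP => y; apply/implyP; apply: cov.
Qed.

Lemma beta_le_card (S : {set T}) : vertex_cover e S -> beta e <= #|S|.
Proof. exact: (bigmin_le_cond _ (fun S : {set T} => #|S|)). Qed.

Lemma leq_beta k :
  k <= #|T| -> (forall S, vertex_cover e S -> k <= #|S|) -> k <= beta e.
Proof. exact: (@le_bigmin _ nat _ _ (fun S : {set T} => #|S|)). Qed.

Lemma gamma_oir2_le_weight f : oi2rd e f -> gamma_oir2 e <= weight f.
Proof. exact: (bigmin_le_cond _ (@weight T)). Qed.

Lemma leq_gamma_oir2 k :
  k <= 2 * #|T| -> (forall f, oi2rd e f -> k <= weight f) -> k <= gamma_oir2 e.
Proof. exact: (@le_bigmin _ nat _ _ (@weight T)). Qed.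

End GraphParameters.

Lemma beta_path m : beta (path_rel m.+1) = m.+1 %/ 2.
Proof.
apply/eqP; rewrite eqn_leq; apply/andP; split.
  pose odds := [set i : 'I_m.+1 | (i : nat) %% 2 == 1].
  have odds_cover : vertex_cover (path_rel m.+1) odds.
    apply/vertex_coverP => x y; rewrite /path_rel !inE.
    by move=> /orP [] /eqP ?; apply/orP; lia.
  apply: leq_trans (beta_le_card odds_cover) _.
  apply: (@inj_card_leq_nat _ _ _ (fun i : 'I_m.+1 => (i : nat) %/ 2)).
    move=> a b; rewrite !inE => /eqP ? /eqP ? ?; apply: val_inj => /=; lia.
  by move=> x; rewrite inE => /eqP ?; have := ltn_ord x; lia.
apply: leq_beta => [|S /vertex_coverP cov]; first by rewrite card_ord; lia.
(* S meets every edge {2k, 2k+1}; g picks such an endpoint. *)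
pose g k : 'I_m.+1 :=
  if inord (2 * k) \in S then inord (2 * k) else inord (2 * k + 1).
have g_half k : k < m.+1 %/ 2 -> (g k : nat) %/ 2 = k.
  by move=> ?; rewrite /g; case: ifP => _; rewrite inordK; lia.
apply: (@inj_nat_leq_card _ _ _ g).
  by move=> a b; rewrite !inE /= => ? ? gab; rewrite -(g_half a) // -(g_half b) // gab.
move=> k ltk; rewrite /g; case: ifP => // notS.
have /cov : path_rel m.+1 (inord (2 * k)) (inord (2 * k + 1)).
  by rewrite /path_rel !inordK; first (apply/orP; left); lia.
by rewrite notS.
Qed.

Lemma alpha_path m : alpha (path_rel m.+1) = m.+1 - m.+1 %/ 2.
Proof.
apply/eqP; rewrite eqn_leq; apply/andP; split.
  apply/bigmax_leqP => S /independentP ind.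
  apply: (@inj_card_leq_nat _ _ _ (fun i : 'I_m.+1 => (i : nat) %/ 2)); last first.
    by move=> x _; have := ltn_ord x; lia.
  move=> a b Sa Sb ab_half; apply/eqP; apply/negPn/negP => neq_ab.
  have := ind a b Sa Sb; rewrite /path_rel; have : (a : nat) != b by [].
  by move=> ?; apply/negP/negPn/orP; lia.
pose evens := [set i : 'I_m.+1 | (i : nat) %% 2 == 0].
have evens_ind : independent (path_rel m.+1) evens.
  apply/independentP => x y; rewrite !inE => /eqP ? /eqP ?.
  by rewrite /path_rel; apply/negP => /orP [] /eqP; lia.
apply: leq_trans (leq_bigmax_cond _ evens_ind).
apply: (@inj_nat_leq_card _ _ _ (fun k => inord (2 * k) : 'I_m.+1)).
  by move=> a b; rewrite !inE /= => ? ? /(congr1 val) /=; rewrite !inordK; lia.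
by move=> k ?; rewrite inE inordK; lia.
Qed.

Lemma beta_complete n : beta (complete_rel n.+1) = n.
Proof.
apply/eqP; rewrite eqn_leq; apply/andP; split.
  have cover : vertex_cover (complete_rel n.+1) [set~ ord0].
    apply/vertex_coverP => x y; rewrite !inE /complete_rel.
    by case: (eqVneq x ord0) => [->|//]; rewrite eq_sym.
  by apply: leq_trans (beta_le_card cover) _; rewrite cardsC1 card_ord.
apply: leq_beta => [|S /vertex_coverP cov]; first by rewrite card_ord.
have : #|~: S| <= 1.
  apply/card_le1_eqP => a b; rewrite !inE => /negbTE Sa /negbTE Sb.
  by case: (eqVneq a b) => [//|/(cov a b)]; rewrite Sa Sb.
by have := cardsC S; rewrite card_ord; lia.
Qed.

Lemma sum_pair (I J : finType) (F : I * J -> nat) :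
  \sum_(v : I * J) F v = \sum_(i : I) \sum_(j : J) F (i, j).
Proof. by rewrite pair_big; apply: eq_bigr => -[]. Qed.

Lemma ord2_neq_eq (a b d : 'I_2) : a != d -> b != d -> a = b.
Proof.
rewrite -!val_eqE => ad bd; apply: val_inj; move: ad bd => /=.
by have := ltn_ord a; have := ltn_ord b; have := ltn_ord d; lia.
Qed.

Section BoxComplete.
Variables (T : finType) (e : rel T) (n : nat).
Local Notation G := (box_rel e (complete_rel n)).

Lemma oi2rd_clique_weight (f : {ffun T * 'I_n -> {set 'I_2}}) x :
  oi2rd G f -> n - 1 <= \sum_(j < n) #|f (x, j)|.
Proof.
case/andP => _ /independentP ind.
pose empty := [set j : 'I_n | f (x, j) == set0].
have : #|empty| <= 1.
  apply/card_le1_eqP => a b; rewrite !inE => fa fb.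
  case: (eqVneq a b) => [//|neq_ab].
  move: (ind (x, a) (x, b)); rewrite !inE fa fb /box_rel /complete_rel /=.
  by rewrite eqxx neq_ab => /(_ isT isT).
move=> le1; have := cardsC empty; rewrite card_ord => card_split.
rewrite (bigID (fun j => j \in ~: empty)) /=; apply: leq_trans (leq_addr _ _).
apply: (@leq_trans #|~: empty|); first lia.
by rewrite -sum1_card; apply: leq_sum => j; rewrite !inE card_gt0.
Qed.

Lemma oi2rd_weight_ge f : oi2rd G f -> #|T| * (n - 1) <= weight f.
Proof.
move=> f_oi; rewrite /weight sum_pair -sum_nat_const.
by apply: leq_sum => x _; apply: leq_trans (oi2rd_clique_weight x f_oi) _.
Qed.

Lemma gamma_oir2_box_complete_ge : #|T| * (n - 1) <= gamma_oir2 G.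
Proof.
apply: leq_gamma_oir2 => [|f /oi2rd_weight_ge //].
by rewrite card_prod card_ord; nia.
Qed.

Variable c : T -> 'I_2.
Hypothesis c_proper : forall x y, e x y -> c x != c y.
Hypothesis no_isolated : forall x, exists y, e x y.
Hypothesis n_gt1 : 1 < n.

Definition colour_labelling : {ffun T * 'I_n -> {set 'I_2}} :=
  [ffun v : T * 'I_n => if v.2 == c v.1 :> nat then set0 else [set c v.1]].

Lemma colour_labelling_eq0 v : (colour_labelling v == set0) = (v.2 == c v.1 :> nat).
Proof. by rewrite ffunE; case: ifP; rewrite ?eqxx // -cards_eq0 cards1. Qed.

Lemma colour_labelling_oi2rd : oi2rd G colour_labelling.
Proof.
apply/andP; split.
  apply/forallP => -[x j]; apply/implyP; rewrite colour_labelling_eq0 /= => /eqP j_cx.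
  apply/eqP/setP => a; rewrite inE; apply/bigcupP.
  have [-> | a_ncx] := eqVneq a (c x).
    have lt_other : 1 - c x < n by lia.
    exists (x, Ordinal lt_other).
      rewrite /box_rel /complete_rel /= eqxx; apply/orP; left.
      by apply/eqP => /(congr1 val) /=; lia.
    rewrite ffunE /=; case: ifP => [/eqP|_]; [lia | exact: set11].
  have [y exy] := no_isolated x.
  have cy_a : c y = a.
    by apply: ord2_neq_eq a_ncx; rewrite eq_sym; apply: c_proper.
  exists (y, j); first by rewrite /box_rel /= eqxx exy orbT.
  rewrite ffunE /= j_cx; case: ifP => [/eqP/val_inj cxy|_]; last by rewrite cy_a set11.
  by move: (c_proper exy); rewrite cxy eqxx.
apply/independentP => -[x j] [y k]; rewrite !inE !colour_labelling_eq0 /=.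
move=> /eqP jx /eqP ky; rewrite /box_rel /complete_rel /=.
apply/negP => /orP [/andP [/eqP xy] | /andP [/eqP jk exy]].
  by subst y => /negP; apply; apply/eqP/val_inj; rewrite /= jx ky.
by move: (c_proper exy) => /negP; apply; apply/eqP/val_inj; rewrite /= -jx -ky jk.
Qed.

Lemma weight_colour_labelling : weight colour_labelling = #|T| * (n - 1).
Proof.
rewrite /weight sum_pair -sum_nat_const; apply: eq_bigr => x _.
have lt_cx : c x < n by have := ltn_ord (c x); lia.
rewrite (bigD1 (Ordinal lt_cx)) //= ffunE eqxx cards0 add0n.
have -> : n - 1 = \sum_(j < n | j != Ordinal lt_cx) 1.
  by rewrite sum1_card cardC1 card_ord subn1.
apply: eq_bigr => j j_ncx.
rewrite ffunE; case: ifP => [/eqP cxj|_]; last by rewrite cards1.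
by move: j_ncx; rewrite (_ : j = Ordinal lt_cx) ?eqxx //; exact: val_inj.
Qed.

Lemma gamma_oir2_box_complete_bipartite : gamma_oir2 G = #|T| * (n - 1).
Proof.
apply/eqP; rewrite eqn_leq gamma_oir2_box_complete_ge andbT.
by rewrite -weight_colour_labelling; exact: gamma_oir2_le_weight colour_labelling_oi2rd.
Qed.

End BoxComplete.

Lemma gamma_oir2_path_complete m n : 2 <= m -> 2 <= n ->
  gamma_oir2 (box_rel (path_rel m) (complete_rel n)) = m * (n - 1).
Proof.
move=> m_ge2 n_ge2.
have parity_proper (x y : 'I_m) :
    path_rel m x y -> (inord (x %% 2) : 'I_2) != inord (y %% 2).
  rewrite /path_rel => xy; apply/negP => /eqP/(congr1 val) /=.
  by rewrite !inordK; move: xy => /orP [] /eqP; lia.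
have no_isolated (x : 'I_m) : exists y, path_rel m x y.
  case: (ltnP x.+1 m) => [lt_next | ge_next].
    by exists (Ordinal lt_next); rewrite /path_rel eqxx.
  have lt_prev : x.-1 < m by have := ltn_ord x; lia.
  by exists (Ordinal lt_prev); apply/orP; right; apply/eqP => /=; lia.
by rewrite (gamma_oir2_box_complete_bipartite parity_proper no_isolated n_ge2) card_ord.
Qed.

Theorem mainTheorem5 (m n : nat) :
  2 <= m -> 2 <= n -> m./2 + 1 <= n ->
  gamma_oir2 (box_rel (path_rel m) (complete_rel n)) = m * (n - 1) /\
  m * (n - 1) =
    alpha (path_rel m) * beta (complete_rel n) + beta (path_rel m) * #|'I_n|
    - minn (beta (path_rel m)) (beta (complete_rel n)).
Proof.
move=> m_ge2 n_ge2 half_lt_n; split; first exact: gamma_oir2_path_complete.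
case: m m_ge2 half_lt_n => [|m] // _; case: n n_ge2 => [|n] // _.
rewrite alpha_path beta_path beta_complete card_ord -divn2 subn1 /= => half_le_n.
rewrite (minn_idPl _); last lia.
have half_le_m : m.+1 %/ 2 <= m.+1 by lia.
have -> : (m.+1 - m.+1 %/ 2) * n + m.+1 %/ 2 * n.+1 = m.+1 * n + m.+1 %/ 2 by nia.
by rewrite addnK.
Qed.
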